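(* Let $n=p^2$ where $p$ is an odd prime, and let $G=\langle p-1\rangle$ be the subgroup of $\mathbb{Z}_n^\times$ generated by $p-1$. Then the coset index function $f_G$ is a $(p^2,p,\{p,p^2-p+1\})$ zero-difference function.
   Context: For a subgroup $G$ of $\mathbb{Z}_n^\times$ and $r\in\mathbb{Z}_n$, the coset $rG=\{rg\mid g\in G\}$; these cosets partition $\mathbb{Z}_n$, forming a set $D_G$. The coset index function induced by $G$ is $f_G:\mathbb{Z}_n\to\mathbb{Z}_{|D_G|}$, $f_G(x)=h_G(C_x)$, where $C_x$ is the coset containing $x$ and $h_G:D_G\to\mathbb{Z}_{|D_G|}$ is a fixed bijection. A function $f:A\to B$ between finite abelian groups is an $(n,m,S)$ zero-difference function if $n=|A|$, $m=|f(A)|$, and for every nonzero $a\in A$, $|\{x\in A\mid f(x+a)=f(x)\}|\in S$. Here $A=(\mathbb{Z}_n,+)$. *)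

From mathcomp Require Import all_boot all_order all_algebra all_fingroup.
Set Implicit Arguments. Unset Strict Implicit. Unset Printing Implicit Defensive.
Import GRing.Theory.
Local Open Scope ring_scope.

Definition Zn_coset (n : nat) (G : {set {unit 'Z_n}}) (r : 'Z_n) : {set 'Z_n} :=
  [set r * val g | g in G].

Definition Zn_cosets (n : nat) (G : {set {unit 'Z_n}}) : {set {set 'Z_n}} :=
  [set Zn_coset G r | r : 'Z_n].

(* Coset index function f_G(x) = h_G(C_x), where C_x = xG is the coset
   containing x and h : D_G -> Z_{|D_G|} (here 'I_#|D_G|). *)
Definition coset_index_fun (n : nat) (G : {set {unit 'Z_n}})
  (h : {set 'Z_n} -> 'I_#|Zn_cosets G|) (x : 'Z_n) : 'I_#|Zn_cosets G| :=
  h (Zn_coset G x).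

Definition coset_bijection (n : nat) (G : {set {unit 'Z_n}})
  (h : {set 'Z_n} -> 'I_#|Zn_cosets G|) : Prop :=
  {in Zn_cosets G &, injective h} /\
  (forall i : 'I_#|Zn_cosets G|, exists2 C, C \in Zn_cosets G & h C = i).

Definition zero_difference (A : finZmodType) (B : finType) (f : A -> B)
  (n m : nat) (S : pred nat) : Prop :=
  [/\ n = #|A|, m = #|f @: [set: A]| &
      forall a : A, a != 0 -> S #|[set x : A | f (x + a) == f x]|].

(* Write x ~ y for y \in x<p-1>.  Since (p - 1)^k = (-1)^k (1 - kp) in Z/p^2,
   the group <p-1> consists of the w with w = +-1 (mod p).  Hence the coset of
   a unit x is {y | y = +-x (mod p)}, while the coset of a multiple x of p is
   {x, -x}; representatives are 1, ..., (p-1)/2 and 0, p, ..., p(p-1)/2, so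
   there are p cosets.  If a is a unit, x + a ~ x forces x + a = -x (mod p),
   i.e. 2x + a = 0 (mod p), which has p solutions.  If a is a nonzero multiple
   of p, x + a ~ x holds for the p^2 - p units x and for the single nonunit
   x = -a/2. *)

From HB Require Import structures.
From mathcomp Require Import all_boot all_order all_algebra all_fingroup.
From mathcomp Require Import zify ring.
Set Implicit Arguments.
Unset Strict Implicit.
Unset Printing Implicit Defensive.
Import GRing.Theory.
Local Open Scope ring_scope.

Section ZnCosets.
Variables (n : nat) (G : {group {unit 'Z_n}}).

Lemma Zn_coset_refl x : x \in Zn_coset G x.
Proof. by apply/imsetP; exists 1%g; rewrite ?group1 ?mulr1. Qed.

Lemma Zn_coset_eqE x y : (Zn_coset G x == Zn_coset G y) = (y \in Zn_coset G x).
Proof.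
apply/eqP/idP => [xy | /imsetP[g Gg ->]]; first by rewrite xy Zn_coset_refl.
apply/setP => z; apply/imsetP/imsetP => [[g1 Gg1 ->] | [g1 Gg1 ->]].
  exists (g^-1 * g1)%g; first by rewrite groupM ?groupV.
  by rewrite -mulrA -FinRing.val_unitM mulgA mulgV mul1g.
by exists (g * g1)%g; rewrite ?groupM // FinRing.val_unitM mulrA.
Qed.

Variables (h : {set 'Z_n} -> 'I_#|Zn_cosets G|) (hG : coset_bijection h).

Lemma coset_index_fun_eqE x y :
  (coset_index_fun h x == coset_index_fun h y) = (y \in Zn_coset G x).
Proof.
rewrite -Zn_coset_eqE /coset_index_fun; apply/eqP/eqP => [|-> //].
by apply: (proj1 hG); apply/imsetP; [exists x | exists y].
Qed.

Lemma card_coset_index_fun_image :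
  #|coset_index_fun h @: [set: 'Z_n]| = #|Zn_cosets G|.
Proof.
suff -> : coset_index_fun h @: [set: 'Z_n] = [set: _].
  by rewrite cardsT card_ord.
apply/setP => i; rewrite inE.
have [_ /imsetP[r _ ->] <-] := proj2 hG i.
by apply/imsetP; exists r.
Qed.

End ZnCosets.

Section Zp2.
Variables (p : nat) (p_pr : prime p).
Local Notation Z := 'Z_(p ^ 2).
Local Notation pZ := (p%:R : Z).

Let p2_gt1 : (1 < p ^ 2)%N.
Proof. by rewrite (ltn_exp2l 0) ?prime_gt1. Qed.

Lemma card_Zp2 : #|Z| = (p ^ 2)%N.
Proof. by rewrite card_ord Zp_cast. Qed.

Definition redp (x : Z) : 'F_p := (x : nat)%:R.

Lemma redp_nat k : redp k%:R = k%:R.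
Proof.
rewrite /redp val_Zp_nat // -(Fp_nat_mod p_pr k) -(Fp_nat_mod p_pr (k %% _)).
by rewrite modn_dvdm // dvdn_exp.
Qed.

Lemma redpD x y : redp (x + y) = redp x + redp y.
Proof.
by rewrite -[x in LHS]natr_Zp -[y in LHS]natr_Zp -natrD redp_nat natrD.
Qed.

Fact redp_is_zmod_morphism : zmod_morphism redp.
Proof. by move=> x y; rewrite -[x in RHS](subrK y) [in RHS]redpD addrK. Qed.
HB.instance Definition _ :=
  GRing.isZmodMorphism.Build _ _ redp redp_is_zmod_morphism.

Fact redp_is_monoid_morphism : monoid_morphism redp.
Proof.
split=> [|x y]; first exact: (redp_nat 1).
by rewrite -[x in LHS]natr_Zp -[y in LHS]natr_Zp -natrM redp_nat natrM.
Qed.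
HB.instance Definition _ :=
  GRing.isMonoidMorphism.Build _ _ redp redp_is_monoid_morphism.

Lemma redp_eq0 x : (redp x == 0) = (p %| x)%N.
Proof. by rewrite /redp -(inj_eq val_inj) /= val_Fp_nat. Qed.

Lemma unitZp2E x : (x \is a GRing.unit) = (redp x != 0).
Proof.
rewrite -[x in LHS]natr_Zp unitZpE // coprime_pexpl //.
by rewrite prime_coprime // redp_eq0.
Qed.

Lemma redp_pZ : redp pZ = 0.
Proof. by rewrite redp_nat pchar_Fp_0. Qed.

Lemma redp_1DpZ c : redp (1 + pZ * c) = 1.
Proof. by rewrite rmorphD rmorphM /= redp_pZ mul0r addr0 rmorph1. Qed.

Lemma mulpZ_eq0 c : (pZ * c == 0) = (redp c == 0).
Proof.
have dvdn_p2 m : (p ^ 2 %| p * m)%N = (p %| m)%N.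
  by rewrite expnS expn1 dvdn_pmul2l ?prime_gt0.
rewrite -[c in LHS]natr_Zp -natrM -(inj_eq val_inj) /= val_Zp_nat //.
by rewrite -/(dvdn _ _) dvdn_p2 redp_eq0.
Qed.

Lemma mulpZI c d : (pZ * c == pZ * d) = (redp c == redp d).
Proof. by rewrite -subr_eq0 -mulrBr mulpZ_eq0 rmorphB /= subr_eq0. Qed.

Lemma redp_eq0P x : reflect (exists c, x = pZ * c) (redp x == 0).
Proof.
apply: (iffP idP) => [| [c ->]]; last by rewrite rmorphM /= redp_pZ mul0r.
rewrite redp_eq0 => /divnK x_eq; exists (x %/ p)%N%:R.
by rewrite -natrM mulnC x_eq natr_Zp.
Qed.

Lemma mul_redp_eq0 x w s : redp x = 0 -> redp w = redp s -> x * w = x * s.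
Proof.
move=> /eqP/redp_eq0P[c ->] ws; apply/eqP.
by rewrite -!mulrA mulpZI !rmorphM /= ws.
Qed.

Lemma card_ker_redp : #|[set x : Z | redp x == 0]| = p.
Proof.
have -> : [set x : Z | redp x == 0] = [set pZ * (c : nat)%:R | c : 'F_p].
  apply/setP => x; rewrite inE; apply/redp_eq0P/imsetP => [[c ->] | [c _ ->]].
    by exists (redp c) => //; apply/eqP; rewrite mulpZI redp_nat natr_Zp.
  by exists (c : nat)%:R.
rewrite card_imset ?card_Fp // => c d /eqP.
by rewrite mulpZI !redp_nat !natr_Zp => /eqP.
Qed.

Lemma expr1DpZ c k : (1 + pZ * c) ^+ k = 1 + pZ * (c * k%:R).
Proof.
elim: k => [|k IHk]; first by rewrite expr0 mulr0 mulr0 addr0.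
have pZ2 : pZ * pZ = 0 by apply/eqP; rewrite mulpZ_eq0 redp_pZ.
rewrite exprS IHk -natr1.
transitivity (1 + pZ * (c * (k%:R + 1)) + pZ * pZ * (c * c * k%:R)); first ring.
by rewrite pZ2 mul0r addr0.
Qed.

Section OddPrime.
Hypothesis p_odd : odd p.

Let p_half : p = (p./2 + p./2).+1.
Proof. by rewrite -[LHS]odd_double_half p_odd addnn add1n. Qed.

Lemma Fp_natr_odd (b : bool) (c : 'F_p) : exists2 k, odd k = b & k%:R = c.
Proof.
exists (c + p * (odd c (+) b))%N; first by rewrite oddD oddM p_odd oddb addKb.
by rewrite natrD natrM pchar_Fp_0 // mul0r addr0 natr_Zp.
Qed.

Lemma Fp_sqr_half_rep (c : 'F_p) :
  exists2 k, (k <= p./2)%N & c ^+ 2 = k%:R ^+ 2.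
Proof.
have c_lt_p : (c < p)%N by rewrite -[X in (_ < X)%N](card_Fp p_pr) card_ord.
have [c_le | c_gt] := leqP c p./2; first by exists c; rewrite ?natr_Zp.
exists (p - c)%N; first lia.
by rewrite natrB ?(ltnW c_lt_p) // pchar_Fp_0 // sub0r sqrrN natr_Zp.
Qed.

Lemma Fp_sqr_half_inj k l : (k <= p./2)%N -> (l <= p./2)%N ->
  k%:R ^+ 2 = l%:R ^+ 2 :> 'F_p -> k = l.
Proof.
move=> k_le l_le /eqP; rewrite eqf_sqr -addr_eq0 -natrD.
have mod_small m : (m <= p./2 + p./2)%N -> (m%:R : 'F_p) = m :> nat.
  by move=> m_le; rewrite val_Fp_nat // modn_small //; lia.
by case/orP=> /eqP /(congr1 (@nat_of_ord _)); rewrite /= !mod_small; lia.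
Qed.

Lemma Fp_half_natr_eq0 k : (k <= p./2)%N -> (k%:R == 0 :> 'F_p) = (k == 0%N).
Proof.
move=> k_le; apply/eqP/eqP => [k0 | ->]; last by [].
by apply: (Fp_sqr_half_inj k_le (leq0n _)); rewrite k0.
Qed.

Lemma unit_Zp2_2 : (2%:R : Z) \is a GRing.unit.
Proof.
by rewrite unitZpE // coprime_pexpl // coprime_sym coprime2n.
Qed.

Section CosetsOfCycle.
Variables (u : {unit Z}) (u_val : val u = (p - 1)%:R).
Local Notation G := <[u]>%g.
Local Notation coset := (Zn_coset G).

Lemma mem_cycleE (g : {unit Z}) : (g \in G) = (redp (val g) ^+ 2 == 1).
Proof.
have u_val' : val u = - (1 + pZ * -1).
  by rewrite u_val natrB ?prime_gt0 // mulrN1 opprD opprK addrC.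
have val_uX k : val (u ^+ k)%g = (-1) ^+ k * (1 + pZ * - k%:R).
  by rewrite FinRing.val_unitX u_val' [in LHS]exprNn expr1DpZ // mulN1r.
apply/cycleP/idP => [[k ->] | g2].
  by rewrite val_uX rmorphM /= redp_1DpZ mulr1 rmorphXn /= rmorphN1 sqrr_sign.
have [b g_sign] : exists b : bool, redp (val g) = (-1) ^+ b.
  by move: g2; rewrite sqrf_eq1 => /orP[] /eqP ->; [exists false | exists true].
have /redp_eq0P[e g_e] : redp ((-1) ^+ b * val g - 1) == 0.
  rewrite rmorphB rmorphM /= rmorphXn rmorphN1 g_sign -expr2 sqrr_sign.
  by rewrite rmorph1 subrr.
(* val g = (-1)^b (1 + pe), so we need k = b (mod 2) and k = -e (mod p). *)
have [k k_odd k_e] := Fp_natr_odd b (- redp e).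
exists k; apply: val_inj; rewrite val_uX -signr_odd k_odd.
rewrite -[val g](signrMK b) -[_ * val g](subrK 1) g_e addrC.
congr (_ * (1 + _)).
by apply/eqP; rewrite mulpZI rmorphN /= redp_nat k_e opprK.
Qed.

Lemma Zn_cosetP x y :
  reflect (exists2 w, redp w ^+ 2 = 1 & y = x * w) (y \in coset x).
Proof.
apply: (iffP imsetP) => [[g Gg ->] | [w w2 ->]].
  by exists (val g) => //; apply/eqP; rewrite -mem_cycleE.
have w_unit : w \is a GRing.unit by rewrite unitZp2E -sqrf_eq0 w2 oner_eq0.
by exists (Sub w w_unit : {unit Z}); rewrite ?mem_cycleE SubK ?w2.
Qed.

Lemma redp_coset_eq0 x y : y \in coset x -> (redp y == 0) = (redp x == 0).
Proof.
case/Zn_cosetP=> w w2 ->.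
by rewrite rmorphM /= mulf_eq0 -[redp w == 0]sqrf_eq0 w2 oner_eq0 orbF.
Qed.

Lemma mem_coset_unit x y :
  redp x != 0 -> (y \in coset x) = (redp y ^+ 2 == redp x ^+ 2).
Proof.
move=> x_neq0; apply/Zn_cosetP/eqP => [[w w2 ->] | y2].
  by rewrite rmorphM /= exprMn w2 mulr1.
have x_unit : x \is a GRing.unit by rewrite unitZp2E.
exists (x^-1 * y); last by rewrite mulVKr.
by rewrite rmorphM /= rmorphV //= exprMn y2 exprVn mulVf ?sqrf_eq0.
Qed.

Lemma mem_coset_nonunit x y :
  redp x = 0 -> (y \in coset x) = (y == x) || (y == - x).
Proof.
move=> x0; apply/Zn_cosetP/orP => [[w /eqP] | [] /eqP ->].
- rewrite sqrf_eq1 => /orP[] /eqP w_sign ->; [left | right]; apply/eqP.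
    by rewrite (@mul_redp_eq0 _ _ 1) ?mulr1 ?rmorph1.
  by rewrite (@mul_redp_eq0 _ _ (-1)) ?mulrN1 ?rmorphN1.
- by exists 1; rewrite ?mulr1 // rmorph1 expr1n.
- by exists (-1); rewrite ?mulrN1 // rmorphN1 sqrrN expr1n.
Qed.

Lemma mem_coset_mulpZ c d :
  (pZ * d \in coset (pZ * c)) = (redp d ^+ 2 == redp c ^+ 2).
Proof.
rewrite mem_coset_nonunit; last by rewrite rmorphM /= redp_pZ mul0r.
by rewrite -mulrN !mulpZI eqf_sqr rmorphN.
Qed.

Lemma card_coset_shift_unit a :
  redp a != 0 -> #|[set x | x + a \in coset x]| = p.
Proof.
move=> a_neq0.
have -> : [set x | x + a \in coset x] =
          (fun x => x + x + a) @^-1: [set x | redp x == 0].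
  apply/setP => x; rewrite !inE !rmorphD /=.
  have [x0 | x_neq0] := eqVneq (redp x) 0.
    rewrite x0 !add0r (negPf a_neq0); apply/negP => /redp_coset_eq0.
    by rewrite rmorphD /= x0 add0r (negPf a_neq0) eqxx.
  rewrite mem_coset_unit // rmorphD /= eqf_sqr -addr_eq0 addrAC.
  by rewrite -subr_eq0 (addrC (redp x)) addrK (negPf a_neq0).
rewrite card_preimset ?card_ker_redp => // x y /addIr.
have twice (z : Z) : z + z = z * 2%:R by rewrite mulr_natr.
by rewrite (twice x) (twice y) => /(mulIr unit_Zp2_2).
Qed.

Lemma card_coset_shift_nonunit a :
  a != 0 -> redp a = 0 -> #|[set x | x + a \in coset x]| = (p ^ 2 - p + 1)%N.
Proof.
move=> a_neq0 a0; set b := a / 2%:R.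
have -> : [set x | x + a \in coset x] = - b |: ~: [set x | redp x == 0].
  apply/setP => x; rewrite !inE.
  have [x0 | x_neq0] := eqVneq (redp x) 0; last first.
    by rewrite mem_coset_unit // rmorphD /= a0 addr0 eqxx orbT.
  rewrite mem_coset_nonunit // -subr_eq0 addrAC subrr add0r (negPf a_neq0) orbF.
  have a_b : a = b + b by rewrite -mulr2n -[b *+ 2]mulr_natr divrK ?unit_Zp2_2.
  rewrite a_b -!addr_eq0 (_ : x + (b + b) + x = (x + b) * 2%:R); last by ring.
  by rewrite -(mul0r 2%:R) (inj_eq (mulIr unit_Zp2_2)).
rewrite cardsU1 !inE negbK rmorphN rmorphM /= a0 mul0r oppr0 eqxx /=.
have := cardsC [set x : Z | redp x == 0].
by rewrite card_ker_redp card_Zp2 => /(canRL (addKn p)) ->; rewrite addnC.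
Qed.

Definition coset_rep (s : 'I_(p./2).+1 + 'I_(p./2)) : Z :=
  match s with inl k => pZ * k%:R | inr i => i.+1%:R end.

Lemma coset_rep_surj x : exists s, x \in coset (coset_rep s).
Proof.
have [/eqP/redp_eq0P[c ->] | x_neq0] := eqVneq (redp x) 0.
  have [k k_le ck] := Fp_sqr_half_rep (redp c).
  exists (inl (Ordinal (k_le : (k < p./2.+1)%N))).
  by rewrite mem_coset_mulpZ redp_nat ck.
have [[|i] i_lt xi] := Fp_sqr_half_rep (redp x).
  by move: x_neq0; rewrite -sqrf_eq0 xi expr0n.
exists (inr (Ordinal (i_lt : (i < p./2)%N))).
by rewrite mem_coset_unit /= redp_nat ?xi // Fp_half_natr_eq0.
Qed.

Lemma coset_rep_inj s t : coset_rep t \in coset (coset_rep s) -> s = t.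
Proof.
have redp_rep_eq0 s' :
    (redp (coset_rep s') == 0) = if s' is inl _ then true else false.
  case: s' => [k | i] /=; first by rewrite rmorphM /= redp_pZ mul0r eqxx.
  by rewrite redp_nat Fp_half_natr_eq0.
move=> /[dup] /redp_coset_eq0; rewrite !redp_rep_eq0.
case: s t => [k | i] [l | j] //= _.
  rewrite mem_coset_mulpZ !redp_nat => /eqP lk; congr inl; apply: val_inj.
  exact/esym/(Fp_sqr_half_inj (ltn_ord l) (ltn_ord k)).
rewrite mem_coset_unit ?redp_nat ?Fp_half_natr_eq0 // => /eqP ji.
congr inr; apply: val_inj.
by have [] := Fp_sqr_half_inj (ltn_ord j) (ltn_ord i) ji.
Qed.

Lemma card_Zn_cosets_cycle : #|Zn_cosets G| = p.
Proof.
have -> : Zn_cosets G =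
          [set coset (coset_rep s) | s : 'I_(p./2).+1 + 'I_(p./2)].
  apply/setP => C; apply/imsetP/imsetP => [[x _ ->] | [s _ ->]].
    have [s xs] := coset_rep_surj x.
    by exists s => //; apply/eqP; rewrite eq_sym Zn_coset_eqE.
  by exists (coset_rep s).
rewrite card_imset => [|s t /eqP].
  by rewrite card_sum !card_ord addSn -p_half.
by rewrite Zn_coset_eqE => /coset_rep_inj.
Qed.

End CosetsOfCycle.
End OddPrime.
End Zp2.

Theorem theorem3p5 (p : nat) (Hp : prime p) (Hodd : odd p)
  (u : {unit 'Z_(p ^ 2)}) (Hu : val u = (p - 1)%:R)
  (h : {set 'Z_(p ^ 2)} -> 'I_#|Zn_cosets <[u]>%g|)
  (Hh : coset_bijection h) :
  zero_difference (coset_index_fun h) (p ^ 2) p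
    [pred k | (k == p) || (k == p ^ 2 - p + 1)%N].
Proof.
split.
- by rewrite card_Zp2.
- by rewrite card_coset_index_fun_image // (card_Zn_cosets_cycle Hp Hodd Hu).
- move=> a a_neq0.
  have -> : [set x | coset_index_fun h (x + a) == coset_index_fun h x] =
            [set x | x + a \in Zn_coset <[u]>%g x].
    by apply/setP => x; rewrite !inE eq_sym (coset_index_fun_eqE Hh).
  have [a0 | a_unit] := eqVneq (redp a) 0.
    by rewrite (card_coset_shift_nonunit Hp Hodd Hu) //= eqxx orbT.
  by rewrite (card_coset_shift_unit Hp Hodd Hu) //= eqxx.
Qed.
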